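(* Let $(s_n)$ be a sequence in $\mathbb{R}^{\mathbb{Z}_<}$ all of whose members are real numbers (i.e. every coefficient other than the $\epsilon^0$-coefficient is zero). Then $(s_n)$ is hyper-Cauchy if and only if there exists $N\in\mathbb{N}$ such that $s_m=s_N$ for all $m\ge N$.
   Context: $\mathbb{R}^{\mathbb{Z}_<}$ is the set of formal series $\sum_{i\ge -k}a_i\epsilon^i$ ($k\in\mathbb{N}\cup\{0\}$, $a_i\in\mathbb{R}$), with coefficientwise addition, Cauchy-product multiplication and lexicographic order ($\mathbf{x}<\mathbf{y}$ iff at the least index where coefficients differ, $\mathbf{x}$'s is smaller); $|\cdot|$ is the associated absolute value; $\epsilon=\langle\widehat0,1,0,\dots\rangle$. $(s_n)$ is hyper-Cauchy iff for every $\iota\in\mathbb{R}^{\mathbb{Z}_<}$ with $\iota>0$ there is $N\in\mathbb{N}$ such that $|s_l-s_m|<\iota$ for all $l,m\ge N$. *)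

(* the field R^{Z_<} of formal Laurent series in epsilon
   with finitely many negative powers and real coefficients. *)
From Stdlib Require Import Reals Lra Lia ZArith ClassicalEpsilon.
Open Scope R_scope.

Definition LS : Type :=
  { a : Z -> R | exists k : nat, forall i : Z, (i < - Z.of_nat k)%Z -> a i = 0 }.

Definition coef (x : LS) : Z -> R := proj1_sig x.

Lemma LS_zero_prop : exists k : nat, forall i : Z, (i < - Z.of_nat k)%Z -> (fun _ : Z => 0) i = 0.
Proof. exists 0%nat. reflexivity. Qed.

Definition ls_zero : LS := exist _ (fun _ => 0) LS_zero_prop.

Lemma LS_opp_prop (x : LS) :
  exists k : nat, forall i : Z, (i < - Z.of_nat k)%Z -> (fun i => - coef x i) i = 0.
Proof.
  destruct x as [a [k Hk]]; exists k; intros i Hi; simpl; rewrite (Hk i Hi); lra.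
Qed.

Definition ls_opp (x : LS) : LS := exist _ (fun i => - coef x i) (LS_opp_prop x).

Lemma LS_sub_prop (x y : LS) :
  exists k : nat, forall i : Z, (i < - Z.of_nat k)%Z ->
    (fun i => coef x i - coef y i) i = 0.
Proof.
  destruct x as [a [k Hk]]; destruct y as [b [l Hl]]; exists (Nat.max k l).
  intros i Hi; simpl; rewrite (Hk i), (Hl i); try lra; lia.
Qed.

Definition ls_sub (x y : LS) : LS :=
  exist _ (fun i => coef x i - coef y i) (LS_sub_prop x y).

Definition ls_lt (x y : LS) : Prop :=
  exists i : Z, (forall j : Z, (j < i)%Z -> coef x j = coef y j) /\ coef x i < coef y i.

Definition ls_abs (x : LS) : LS :=
  match excluded_middle_informative (ls_lt x ls_zero) with
  | left _ => ls_opp x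
  | right _ => x
  end.

Definition ls_is_real (x : LS) : Prop := forall i : Z, i <> 0%Z -> coef x i = 0.

Definition hyper_cauchy (s : nat -> LS) : Prop :=
  forall iota : LS, ls_lt ls_zero iota ->
    exists N : nat, forall l m : nat, (N <= l)%nat -> (N <= m)%nat ->
      ls_lt (ls_abs (ls_sub (s l) (s m))) iota.

(* eps is a positive infinitesimal: a real number whose absolute value lies
   below eps must vanish.  Differences of real members of the sequence are
   real, so the hyper-Cauchy condition for iota = eps alone forces the sequence
   to be eventually constant; conversely an eventually constant sequence has
   eventually zero differences, and 0 lies below every positive iota. *)
From Stdlib Require Import Reals ZArith Lra Lia ProofIrrelevance FunctionalExtensionality
  ClassicalEpsilon.

Lemma ls_ext (x y : LS) : (forall i, coef x i = coef y i) -> x = y.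
Proof.
  destruct x as [a pa], y as [b pb]; unfold coef; simpl; intros H.
  assert (a = b) by (apply functional_extensionality; exact H); subst.
  f_equal; apply proof_irrelevance.
Qed.

Lemma ls_lt_irrefl (x : LS) : ~ ls_lt x x.
Proof. intros [i [_ H]]; lra. Qed.

Lemma ls_abs_zero : ls_abs ls_zero = ls_zero.
Proof.
  unfold ls_abs; destruct (excluded_middle_informative (ls_lt ls_zero ls_zero)) as [H|_].
  - destruct (ls_lt_irrefl _ H).
  - reflexivity.
Qed.

Lemma ls_sub_diag (x : LS) : ls_sub x x = ls_zero.
Proof. apply ls_ext; intros i; simpl; lra. Qed.

Lemma ls_sub_eq0 (x y : LS) : ls_sub x y = ls_zero -> x = y.
Proof.
  intros H; apply ls_ext; intros i.
  assert (Hi : coef (ls_sub x y) i = coef ls_zero i) by now rewrite H.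
  simpl in Hi; lra.
Qed.

Lemma ls_is_real_zero : ls_is_real ls_zero.
Proof. intros i _; reflexivity. Qed.

Lemma ls_is_real_sub (x y : LS) :
  ls_is_real x -> ls_is_real y -> ls_is_real (ls_sub x y).
Proof. intros Hx Hy i Hi; simpl; rewrite (Hx i Hi), (Hy i Hi); lra. Qed.

Lemma ls_is_real_opp (x : LS) : ls_is_real x -> ls_is_real (ls_opp x).
Proof. intros Hx i Hi; simpl; rewrite (Hx i Hi); lra. Qed.

Lemma ls_is_real_eq0 (x : LS) : ls_is_real x -> coef x 0 = 0 -> x = ls_zero.
Proof.
  intros Hx H0; apply ls_ext; intros i.
  destruct (Z.eq_dec i 0) as [->|Hi]; [exact H0|exact (Hx i Hi)].
Qed.

Lemma ls_lt_real (x y : LS) :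
  ls_is_real x -> ls_is_real y -> ls_lt x y <-> coef x 0 < coef y 0.
Proof.
  intros Hx Hy; split.
  - intros [i [Hbelow Hi]].
    destruct (Z.eq_dec i 0) as [->|Hi0]; [exact Hi|].
    rewrite (Hx i Hi0), (Hy i Hi0) in Hi; lra.
  - intros H0; exists 0%Z; split; [|exact H0].
    intros j Hj; rewrite (Hx j), (Hy j) by lia; reflexivity.
Qed.

Lemma ls_is_real_abs (x : LS) :
  ls_is_real x -> ls_is_real (ls_abs x) /\ coef (ls_abs x) 0 = Rabs (coef x 0).
Proof.
  intros Hx.
  pose proof (ls_lt_real x ls_zero Hx ls_is_real_zero) as Hneg; simpl in Hneg.
  unfold ls_abs; destruct (excluded_middle_informative (ls_lt x ls_zero)) as [H|H].
  - split; [exact (ls_is_real_opp x Hx)|].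
    simpl; rewrite Rabs_left; [reflexivity|now apply Hneg].
  - split; [exact Hx|].
    rewrite Rabs_right; [reflexivity|].
    apply Rnot_lt_ge; intros Hlt; apply H, Hneg, Hlt.
Qed.

Definition eps_coef (i : Z) : R := if Z.eq_dec i 1 then 1 else 0.

Lemma eps_coef_prop :
  exists k : nat, forall i : Z, (i < - Z.of_nat k)%Z -> eps_coef i = 0.
Proof.
  exists 0%nat; intros i Hi; unfold eps_coef.
  destruct (Z.eq_dec i 1); [lia|reflexivity].
Qed.

Definition ls_eps : LS := exist _ eps_coef eps_coef_prop.

Lemma ls_eps_pos : ls_lt ls_zero ls_eps.
Proof.
  exists 1%Z; simpl; unfold eps_coef; split.
  - intros j Hj; destruct (Z.eq_dec j 1); [lia|reflexivity].
  - destruct (Z.eq_dec 1 1); [lra|congruence].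
Qed.

Lemma ls_real_lt_eps (x : LS) : ls_is_real x -> ls_lt x ls_eps -> coef x 0 <= 0.
Proof.
  intros Hx [i [Hbelow Hi]]; simpl in Hbelow, Hi; unfold eps_coef in Hbelow, Hi.
  destruct (Z_lt_le_dec 0 i) as [Hpos|Hle].
  - rewrite (Hbelow 0%Z Hpos); destruct (Z.eq_dec 0 1); [lia|lra].
  - destruct (Z.eq_dec i 1) as [|_]; [lia|].
    destruct (Z.eq_dec i 0) as [->|Hi0]; [lra|].
    rewrite (Hx i Hi0) in Hi; lra.
Qed.

Lemma ls_real_abs_lt_eps (x : LS) :
  ls_is_real x -> ls_lt (ls_abs x) ls_eps -> x = ls_zero.
Proof.
  intros Hx Hlt.
  destruct (ls_is_real_abs x Hx) as [Habs Habs0].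
  pose proof (ls_real_lt_eps _ Habs Hlt) as Hle.
  rewrite Habs0 in Hle.
  pose proof (Rle_abs (coef x 0)); pose proof (Rle_abs (- coef x 0)); rewrite Rabs_Ropp in *.
  apply ls_is_real_eq0; [exact Hx|lra].
Qed.

Theorem mainTheorem18 (s : nat -> LS) (Hreal : forall n : nat, ls_is_real (s n)) :
  hyper_cauchy s <-> exists N : nat, forall m : nat, (N <= m)%nat -> s m = s N.
Proof.
  split.
  - intros Hcauchy.
    destruct (Hcauchy ls_eps ls_eps_pos) as [N HN].
    exists N; intros m Hm.
    apply ls_sub_eq0, ls_real_abs_lt_eps.
    + apply ls_is_real_sub; apply Hreal.
    + exact (HN m N Hm (le_n N)).
  - intros [N HN] iota Hiota.
    exists N; intros l m Hl Hm.
    rewrite (HN l Hl), (HN m Hm), ls_sub_diag, ls_abs_zero.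
    exact Hiota.
Qed.
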